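(* Let $P$ be an $L$-dcpo and $x\in P$. If there exists a directed $L$-subset $D\in L^P$ such that $D\le k(x)$ and $\sqcup D=x$, then $k(x)$ is directed and $x=\sqcup k(x)$.
   Context: $L$ is a frame with implication $\to$. $L$-order $e$ on $P$: $e(x,x)=1$, $e(x,y)\wedge e(y,z)\le e(x,z)$, $e(x,y)\wedge e(y,x)=1\Rightarrow x=y$. ${\rm sub}_P(A,B)=\bigwedge_xA(x)\to B(x)$; ${\downarrow}y(x)=e(x,y)$; $\sqcup A=x$ iff $e(x,y)={\rm sub}_P(A,{\downarrow}y)$ for all $y$. Directed: $\bigvee_xD(x)=1$ and $D(x)\wedge D(y)\le\bigvee_zD(z)\wedge e(x,z)\wedge e(y,z)$; ideal: directed lower set ($I(x)\wedge e(y,x)\le I(y)$); $L$-dcpo: every directed $L$-subset has a supremum. ${\Downarrow}x(y)=\bigwedge\{e(x,\sqcup I)\to I(y):I\text{ ideal of }P\}$. $K(P)=\{x:{\Downarrow}x(x)=1\}$; $k(x)\in L^P$ is $k(x)(y)=e(y,x)$ for $y\in K(P)$ and $0$ otherwise. $D\le k(x)$ is pointwise. *)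

From Stdlib Require Import ClassicalEpsilon.

(* A frame with implication: a complete lattice (arbitrary joins of subsets),
   binary meets, and an implication right adjoint to meet (hence meets
   distribute over arbitrary joins). *)
Record frame := Frame {
  fcar :> Type;
  fle : fcar -> fcar -> Prop;
  fle_refl : forall a, fle a a;
  fle_trans : forall a b c, fle a b -> fle b c -> fle a c;
  fle_antisym : forall a b, fle a b -> fle b a -> a = b;
  fsup : (fcar -> Prop) -> fcar;
  fsup_ub : forall (S : fcar -> Prop) a, S a -> fle a (fsup S);
  fsup_least : forall (S : fcar -> Prop) u, (forall a, S a -> fle a u) -> fle (fsup S) u;
  fmeet : fcar -> fcar -> fcar;
  fmeet_lb1 : forall a b, fle (fmeet a b) a;
  fmeet_lb2 : forall a b, fle (fmeet a b) b;
  fmeet_glb : forall a b c, fle c a -> fle c b -> fle c (fmeet a b);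
  fimp : fcar -> fcar -> fcar;
  fimp_adj : forall a b c, fle (fmeet a b) c <-> fle a (fimp b c)
}.

Arguments fle {f}.
Arguments fsup {f}.
Arguments fmeet {f}.
Arguments fimp {f}.

Section FrameOps.
Context {L : frame}.
Definition bigsup {I : Type} (F : I -> L) : L := fsup (fun a => exists i, a = F i).
Definition biginf {I : Type} (F : I -> L) : L :=
  fsup (fun c => forall i, fle c (F i)).
Definition ftop : L := fsup (fun _ => True).
Definition fbot : L := fsup (fun _ => False).
End FrameOps.

Section LOrder.
Context {L : frame} {P : Type} (e : P -> P -> L).

Definition is_Lorder : Prop :=
  (forall x, e x x = ftop) /\
  (forall x y z, fle (fmeet (e x y) (e y z)) (e x z)) /\
  (forall x y, fmeet (e x y) (e y x) = ftop -> x = y).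

Definition subP (A B : P -> L) : L := biginf (fun x => fimp (A x) (B x)).

Definition down (y : P) : P -> L := fun x => e x y.

Definition is_sup (A : P -> L) (x : P) : Prop :=
  forall y, e x y = subP A (down y).

Definition directed (D : P -> L) : Prop :=
  bigsup D = ftop /\
  (forall x y, fle (fmeet (D x) (D y))
                   (bigsup (fun z => fmeet (D z) (fmeet (e x z) (e y z))))).

Definition lower_set (I : P -> L) : Prop :=
  forall x y, fle (fmeet (I x) (e y x)) (I y).

Definition ideal (I : P -> L) : Prop := directed I /\ lower_set I.

Definition Ldcpo : Prop := forall D, directed D -> exists x, is_sup D x.

(* Way-below: Wb x y = /\ { e(x, sup I) -> I(y) : I ideal }.  The meet is
   indexed by pairs (I, s) with I an ideal and s = sup I (sups are unique). *)
Definition wayb (x y : P) : L :=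
  biginf (fun p : {Is : (P -> L) * P | ideal (fst Is) /\ is_sup (fst Is) (snd Is)} =>
            fimp (e x (snd (proj1_sig p))) (fst (proj1_sig p) y)).

Definition compact (x : P) : Prop := wayb x x = ftop.

Definition kset (x : P) : P -> L := fun y =>
  if excluded_middle_informative (compact y) then e y x else fbot.

End LOrder.

(* Let I be the L-ideal generated by D, I(y) = \/_z D(z) /\ e(y,z).  It is an
   ideal with supremum x, so the definition of the way-below relation gives
   e(y,x) <= I(y) for every compact y, i.e. D <= k(x) <= I pointwise.
   Directedness of D transfers through I to k(x), and since k(x) lies between
   D and the down-set of x, both have the same supremum x. *)

From Stdlib Require Import ClassicalEpsilon.

Ltac fmeet_proj := solve [ apply fle_refl
  | eapply fle_trans; [apply fmeet_lb1 | fmeet_proj]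
  | eapply fle_trans; [apply fmeet_lb2 | fmeet_proj] ].

Section FrameFacts.
Context {L : frame}.

Lemma fle_ftop (a : L) : fle a ftop.
Proof. exact (fsup_ub L _ a I). Qed.

Lemma fle_fbot (a : L) : fle fbot a.
Proof. apply fsup_least. intros c []. Qed.

Lemma fle_ftop_eq (a : L) : fle ftop a -> a = ftop.
Proof. intros H. apply fle_antisym; [apply fle_ftop | exact H]. Qed.

Lemma fmeet_comm_le (a b : L) : fle (fmeet a b) (fmeet b a).
Proof. apply fmeet_glb; fmeet_proj. Qed.

Lemma fmeet_mono (a a' b b' : L) :
  fle a a' -> fle b b' -> fle (fmeet a b) (fmeet a' b').
Proof.
  intros Ha Hb. apply fmeet_glb.
  - eapply fle_trans; [apply fmeet_lb1 | exact Ha].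
  - eapply fle_trans; [apply fmeet_lb2 | exact Hb].
Qed.

Lemma bigsup_ub {I : Type} (F : I -> L) i : fle (F i) (bigsup F).
Proof. apply fsup_ub. exists i. reflexivity. Qed.

Lemma bigsup_least {I : Type} (F : I -> L) u :
  (forall i, fle (F i) u) -> fle (bigsup F) u.
Proof. intros H. apply fsup_least. intros a [i ->]. apply H. Qed.

Lemma bigsup_mono {I : Type} (F G : I -> L) :
  (forall i, fle (F i) (G i)) -> fle (bigsup F) (bigsup G).
Proof.
  intros H. apply bigsup_least. intro i.
  eapply fle_trans; [apply H | apply bigsup_ub].
Qed.

Lemma biginf_lb {I : Type} (F : I -> L) i : fle (biginf F) (F i).
Proof. apply fsup_least. intros c Hc. apply Hc. Qed.

Lemma biginf_glb {I : Type} (F : I -> L) c :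
  (forall i, fle c (F i)) -> fle c (biginf F).
Proof. exact (fsup_ub L _ c). Qed.

Lemma fmeet_bigsup_l {I : Type} (F : I -> L) b u :
  (forall i, fle (fmeet (F i) b) u) -> fle (fmeet (bigsup F) b) u.
Proof.
  intros H. apply (fimp_adj L). apply bigsup_least. intro i.
  apply (fimp_adj L). apply H.
Qed.

Lemma fmeet_bigsup_r {I : Type} (F : I -> L) a u :
  (forall i, fle (fmeet a (F i)) u) -> fle (fmeet a (bigsup F)) u.
Proof.
  intros H. eapply fle_trans; [apply fmeet_comm_le |].
  apply fmeet_bigsup_l. intro i.
  eapply fle_trans; [apply fmeet_comm_le | apply H].
Qed.

Lemma fimp_ftop_le (a b : L) : fle ftop (fimp a b) -> fle a b.
Proof.
  intros H. apply (fimp_adj L) in H.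
  eapply fle_trans; [| exact H]. apply fmeet_glb; [apply fle_ftop | apply fle_refl].
Qed.

Lemma fimp_antitone (b b' c : L) : fle b' b -> fle (fimp b c) (fimp b' c).
Proof.
  intros H. apply (fimp_adj L).
  eapply fle_trans; [apply fmeet_mono; [apply fle_refl | exact H] |].
  apply (fimp_adj L). apply fle_refl.
Qed.

End FrameFacts.

Section LOrderFacts.
Context {L : frame} {P : Type} (e : P -> P -> L).
Hypothesis He : is_Lorder e.

Lemma Lorder_trans a b c : fle (fmeet (e a b) (e b c)) (e a c).
Proof. apply (proj1 (proj2 He)). Qed.

Lemma is_sup_le_down (A : P -> L) x z : is_sup e A x -> fle (A z) (e z x).
Proof.
  intros Hx. apply fimp_ftop_le.
  rewrite <- (proj1 He x), (Hx x).
  exact (biginf_lb (fun w => fimp (A w) (down e x w)) z).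
Qed.

Lemma is_sup_of_le (A B : P -> L) x :
  (forall z, fle (A z) (B z)) -> (forall z, fle (B z) (e z x)) ->
  is_sup e A x -> is_sup e B x.
Proof.
  intros HAB HBx HA y. apply fle_antisym.
  - apply biginf_glb. intro z. apply (fimp_adj L).
    eapply fle_trans; [| apply (Lorder_trans z x y)].
    eapply fle_trans; [apply fmeet_comm_le | apply fmeet_mono; [apply HBx | apply fle_refl]].
  - rewrite (HA y). apply biginf_glb. intro z.
    eapply fle_trans; [apply (biginf_lb _ z) | apply fimp_antitone, HAB].
Qed.

Lemma compact_le_ideal (I : P -> L) s a :
  compact e a -> ideal e I -> is_sup e I s -> fle (e a s) (I a).
Proof.
  intros Ha HI Hs. apply fimp_ftop_le. rewrite <- Ha.
  exact (biginf_lb (fun p : {Is : (P -> L) * P | ideal e (fst Is) /\ is_sup e (fst Is) (snd Is)} =>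
           fimp (e a (snd (proj1_sig p))) (fst (proj1_sig p) a))
         (exist _ (I, s) (conj HI Hs))).
Qed.

Definition lower_closure (D : P -> L) (y : P) : L :=
  bigsup (fun z => fmeet (D z) (e y z)).

Lemma le_lower_closure (D : P -> L) y : fle (D y) (lower_closure D y).
Proof.
  eapply fle_trans; [| apply (bigsup_ub _ y)].
  apply fmeet_glb; [apply fle_refl |]. rewrite (proj1 He). apply fle_ftop.
Qed.

Lemma lower_closure_lower_set (D : P -> L) : lower_set e (lower_closure D).
Proof.
  intros y z. apply fmeet_bigsup_l. intro w.
  eapply fle_trans; [| apply (bigsup_ub _ w)].
  apply fmeet_glb; [fmeet_proj |].
  eapply fle_trans; [| apply (Lorder_trans z y w)]. apply fmeet_glb; fmeet_proj.
Qed.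

Lemma lower_closure_meet_le (D : P -> L) a b : directed e D ->
  fle (fmeet (lower_closure D a) (lower_closure D b))
      (bigsup (fun u => fmeet (D u) (fmeet (e a u) (e b u)))).
Proof.
  intros HD. apply fmeet_bigsup_l. intro z. apply fmeet_bigsup_r. intro w.
  apply fle_trans with (fmeet (fmeet (D z) (D w)) (fmeet (e a z) (e b w))).
  { apply fmeet_glb; apply fmeet_glb; fmeet_proj. }
  eapply fle_trans; [apply fmeet_mono; [apply (proj2 HD) | apply fle_refl] |].
  apply fmeet_bigsup_l. intro v. eapply fle_trans; [| apply (bigsup_ub _ v)].
  apply fmeet_glb; [fmeet_proj |]. apply fmeet_glb.
  - eapply fle_trans; [| apply (Lorder_trans a z v)]. apply fmeet_glb; fmeet_proj.
  - eapply fle_trans; [| apply (Lorder_trans b w v)]. apply fmeet_glb; fmeet_proj.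
Qed.

Lemma directed_of_between (D B : P -> L) : directed e D ->
  (forall y, fle (D y) (B y)) -> (forall y, fle (B y) (lower_closure D y)) ->
  directed e B.
Proof.
  intros HD HDB HBD. split.
  - apply fle_ftop_eq. rewrite <- (proj1 HD). apply bigsup_mono, HDB.
  - intros a b. eapply fle_trans; [apply fmeet_mono; apply HBD |].
    eapply fle_trans; [apply (lower_closure_meet_le D a b HD) |].
    apply bigsup_mono. intro u. apply fmeet_mono; [apply HDB | apply fle_refl].
Qed.

Lemma lower_closure_ideal (D : P -> L) : directed e D -> ideal e (lower_closure D).
Proof.
  intros HD. split; [| apply lower_closure_lower_set].
  apply (directed_of_between D); [exact HD | apply le_lower_closure | intro; apply fle_refl].
Qed.

Lemma lower_closure_is_sup (D : P -> L) x : is_sup e D x -> is_sup e (lower_closure D) x.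
Proof.
  intros Hx. apply (is_sup_of_le D); [apply le_lower_closure | | exact Hx].
  intro z. apply bigsup_least. intro w.
  eapply fle_trans; [| apply (Lorder_trans z w x)].
  apply fmeet_glb; [fmeet_proj |].
  eapply fle_trans; [apply fmeet_lb1 | apply (is_sup_le_down D x w Hx)].
Qed.

Lemma kset_le_down x y : fle (kset e x y) (e y x).
Proof.
  unfold kset. destruct excluded_middle_informative; [apply fle_refl | apply fle_fbot].
Qed.

Lemma kset_le_lower_closure (D : P -> L) x y :
  directed e D -> is_sup e D x -> fle (kset e x y) (lower_closure D y).
Proof.
  intros HD Hx. unfold kset. destruct excluded_middle_informative as [Hy | _].
  - exact (compact_le_ideal _ x y Hy (lower_closure_ideal D HD) (lower_closure_is_sup D x Hx)).
  - apply fle_fbot.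
Qed.

End LOrderFacts.

Theorem lemma5p8 (L : frame) (P : Type) (e : P -> P -> L)
  (He : is_Lorder e) (Hdcpo : Ldcpo e) (x : P) :
  (exists D : P -> L, directed e D /\ (forall y, fle (D y) (kset e x y)) /\ is_sup e D x) ->
  directed e (kset e x) /\ is_sup e (kset e x) x.
Proof.
  intros [D [HD [HDk HDx]]]. split.
  - apply (directed_of_between e He D); [exact HD | exact HDk |].
    intro y. exact (kset_le_lower_closure e He D x y HD HDx).
  - apply (is_sup_of_le e He D); [exact HDk | apply kset_le_down | exact HDx].
Qed.
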